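(* Let $\mathbb{F} = \mathbb{F}_0(\omega)$ be a degree-$2$ extension field of a field $\mathbb{F}_0$. Let $h,d,m,n$ be nonnegative integers satisfying $0 \le h \le d \le n$, and let $A,B \in \mathbb{F}_0^{d \times n}$ and $P \in \mathbb{F}_0^{m \times n}$ be such that $\operatorname{rank}\begin{pmatrix} A+\omega B \\ P \end{pmatrix} = m+d$, $\operatorname{rank}(P) = m$ and $\operatorname{rank}\begin{pmatrix} A \\ B \\ P \end{pmatrix} \le m+2d-h$. Then there exist matrices $A',B' \in \mathbb{F}_0^{d \times n}$ such that $\begin{pmatrix} A+\omega B \\ P \end{pmatrix}$ and $\begin{pmatrix} A'+\omega B' \\ P \end{pmatrix}$ are row-equivalent and $B'$ has $h$ zero rows.
   Context: Here $\begin{pmatrix} X \\ Y \end{pmatrix}$ denotes the matrix obtained by stacking $X$ on top of $Y$. Row-equivalence means one matrix is obtained from the other by elementary row operations (over $\mathbb{F}$). *)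

From HB Require Import structures.
From mathcomp Require Import all_boot all_order all_algebra all_field.
Set Implicit Arguments. Unset Strict Implicit. Unset Printing Implicit Defensive.
Import GRing.Theory.
Local Open Scope ring_scope.

Definition row_equiv (K : fieldType) (r c : nat) (M M' : 'M[K]_(r, c)) : Prop :=
  exists U : 'M[K]_r, U \in unitmx /\ M' = U *m M.

Definition has_zero_rows (K : fieldType) (r c : nat) (M : 'M[K]_(r, c)) (h : nat) : Prop :=
  exists S : {set 'I_r}, #|S| = h /\ forall i, i \in S -> row i M = 0.

(* Write F = F0 + F0 w with w * w = alpha + beta w.  The F-combination of the
   rows of M = [A + w B; P] with coefficients u1 + w u2 on the first block and
   w u3 on P equals (u1 A + alpha u2 B) + w (u1 B + u2 (A + beta B) + u3 P).
   When the w-part vanishes, the real row u1 A + alpha u2 B lies in the row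
   space of M, and since M has full row rank it lies in the row space of P
   only for u = 0.  The u with vanishing w-part form the kernel of
   [B; A + beta B; P], of dimension at least 2d + m - rank [A; B; P] >= h, so
   the row space of M contains h independent real rows R meeting that of P
   trivially.  Completing [R; P] to a basis of the row space of M and splitting
   the completed block [R; X] into real and imaginary parts gives A' and B',
   whose first h rows are R and 0. *)

From HB Require Import structures.
From mathcomp Require Import all_boot all_order all_algebra all_field.
From mathcomp Require Import zify.
Set Implicit Arguments.
Unset Strict Implicit.
Unset Printing Implicit Defensive.
Import GRing.Theory.
Local Open Scope ring_scope.

Section RowSpaces.
Variable K : fieldType.

Lemma exists_row_free_submx p n h (Z : 'M[K]_(p, n)) :
  (h <= \rank Z)%N -> exists R : 'M_(h, n), row_free R /\ (R <= Z)%MS.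
Proof.
move=> hZ; exists (pid_mx h *m row_base Z); split.
  by rewrite /row_free mxrankMfree ?row_base_free ?rank_pid_mx.
by rewrite (submx_trans (submxMl _ _)) ?eq_row_base.
Qed.

Lemma row_equiv_sub r n (M M' : 'M[K]_(r, n)) :
  (M' <= M)%MS -> row_free M' -> row_equiv M M'.
Proof.
move=> sM'M M'free; exists (M' *m pinvmx M); split; last by rewrite mulmxKpV.
rewrite -row_free_unit /row_free eqn_leq rank_leq_row /=.
by rewrite -{1}(eqP M'free) -{1}(mulmxKpV sM'M) mxrankM_maxl.
Qed.

Lemma row_equiv_completion h k m n (M : 'M[K]_(h + k + m, n))
    (R : 'M_(h, n)) (P : 'M_(m, n)) :
  row_free M -> row_free (col_mx R P) -> (col_mx R P <= M)%MS ->
  exists X : 'M_(k, n), row_equiv M (col_mx (col_mx R X) P).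
Proof.
move=> Mfree; rewrite /row_free -!addsmxE => /eqP rkRP sRPM.
have [X [Xfree sXD]] : exists X : 'M_(k, n), row_free X /\ (X <= M :\: (R + P))%MS.
  apply: exists_row_free_submx; have := mxrank_cap_compl M (R + P)%MS.
  by rewrite (capmx_idPr sRPM) (eqP Mfree) rkRP; lia.
have RPX0 : ((R + P) :&: X)%MS = 0.
  by apply/eqP; rewrite -submx0 -(capmx_diff M (R + P)%MS) capmxC capmxS.
exists X; apply: row_equiv_sub.
  move: sRPM; rewrite addsmx_sub => /andP [sRM sPM].
  by rewrite !col_mx_sub sRM sPM (submx_trans sXD) ?diffmxSl.
rewrite /row_free -addsmxE -(adds_eqmx (addsmxE R X) (eqmx_refl P)).
by rewrite -addsmxA (addsmxC X) addsmxA mxrank_disjoint_sum // rkRP (eqP Xfree) addnAC.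
Qed.

Lemma has_zero_rows_col0mx h k n (Y : 'M[K]_(k, n)) :
  has_zero_rows (col_mx (0 : 'M_(h, n)) Y) h.
Proof.
exists [set lshift k i | i : 'I_h]; split.
  by rewrite card_imset ?card_ord //; exact: lshift_inj.
by move=> _ /imsetP [i _ ->]; rewrite rowKu row0.
Qed.

End RowSpaces.

Section QuadraticExtension.
Variables (F0 : fieldType) (F : fieldExtType F0) (w : F).
Hypotheses (dimF : \dim {:F} = 2%N) (F_gen : <<1%VS; w>>%VS = fullv).

Let basis_1w : 2.-tuple F := [tuple 1; w].

Lemma free_1w : free basis_1w.
Proof.
have w_notin1 : w \notin 1%VS.
  by apply/negP => /Fadjoin_idP w1; move: dimF; rewrite -F_gen w1 dimv1.
rewrite -(perm_free (_ : perm_eq [:: w; 1] _)); last by rewrite (perm_catC [:: w]).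
by rewrite free_cons seq1_free oner_neq0 span_seq1 w_notin1.
Qed.

Definition re (x : F) : F0 := coord basis_1w 0 x.
Definition im (x : F) : F0 := coord basis_1w 1 x.

Lemma re_im_decomp x : (re x)%:A + im x *: w = x.
Proof.
have : x \in <<basis_1w>>%VS.
  suff -> : <<basis_1w>>%VS = fullv by apply: memvf.
  by apply/eqP; rewrite eqEdim subvf (eqP free_1w) dimF.
move/coord_span=> xE; rewrite [RHS]xE big_ord_recr big_ord1.
have -> : widen_ord (leqnSn 1) ord0 = 0 :> 'I_2 by apply: val_inj.
by have -> : ord_max = 1 :> 'I_2 by apply: val_inj.
Qed.

Lemma re_alg_w a b : re (a%:A + b *: w) = a.
Proof.
rewrite /re linearD !linearZ /= (coord_free 0 0 free_1w) (coord_free 1 0 free_1w).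
by rewrite mulr1 mulr0 addr0.
Qed.

Lemma im_alg_w a b : im (a%:A + b *: w) = b.
Proof.
rewrite /im linearD !linearZ /= (coord_free 0 1 free_1w) (coord_free 1 1 free_1w).
by rewrite mulr1 mulr0 add0r.
Qed.

Local Notation inF := (map_mx (in_alg F)).

Lemma map_re_mx r c (X Y : 'M[F0]_(r, c)) : map_mx re (inF X + w *: inF Y) = X.
Proof. by apply/matrixP => i j; rewrite !mxE /= mulr_algr re_alg_w. Qed.

Lemma map_im_mx r c (X Y : 'M[F0]_(r, c)) : map_mx im (inF X + w *: inF Y) = Y.
Proof. by apply/matrixP => i j; rewrite !mxE /= mulr_algr im_alg_w. Qed.

Lemma re_im_mx r c (M : 'M[F]_(r, c)) : inF (map_mx re M) + w *: inF (map_mx im M) = M.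
Proof. by apply/matrixP => i j; rewrite !mxE /= mulr_algr re_im_decomp. Qed.

Lemma map_im_inF r c (X : 'M[F0]_(r, c)) : map_mx im (inF X) = 0.
Proof. by rewrite -[inF X]addr0 -(scaler0 _ w) -(map_mx0 (in_alg F)) map_im_mx. Qed.

Lemma alg_w_mx_eq0 r c (X Y : 'M[F0]_(r, c)) : inF X + w *: inF Y = 0 -> X = 0 /\ Y = 0.
Proof.
move=> XY0; split.
  by rewrite -(map_re_mx X Y) XY0; apply/matrixP => i j; rewrite !mxE /re linear0.
by rewrite -(map_im_mx X Y) XY0; apply/matrixP => i j; rewrite !mxE /im linear0.
Qed.

Let alpha := re (w * w).
Let beta := im (w * w).

Lemma sqr_w : w * w = alpha%:A + beta *: w.
Proof. by rewrite re_im_decomp. Qed.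

Section RealCombinations.
Variables (d m n : nat) (A B : 'M[F0]_(d, n)) (P : 'M[F0]_(m, n)).
Let M := col_mx (inF A + w *: inF B) (inF P).

Definition real_part_mx := col_mx A (col_mx (alpha *: B) (0 : 'M_(m, n))).
Definition imag_part_mx := col_mx B (col_mx (A + beta *: B) P).

Definition lift_coef r (u : 'M[F0]_(r, d + (d + m))) : 'M[F]_(r, d + m) :=
  row_mx (inF (lsubmx u) + w *: inF (lsubmx (rsubmx u))) (w *: inF (rsubmx (rsubmx u))).

Lemma lift_coef_mul r (u : 'M_(r, d + (d + m))) :
  lift_coef u *m M = inF (u *m real_part_mx) + w *: inF (u *m imag_part_mx).
Proof.
rewrite /lift_coef -[u in RHS]hsubmxK -[rsubmx u in RHS]hsubmxK.
rewrite !mul_row_col mulmx0 addr0 !mulmxDl !mulmxDr.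
rewrite -!scalemxAl -!scalemxAr !scalerA sqr_w.
rewrite !map_mxD !map_mxZ !map_mxM !scalerDl !scalerDr !scalerA !mulr_algr.
by rewrite !addrA; congr (_ + _ + _); rewrite -!addrA; congr (_ + _); rewrite addrA addrC.
Qed.

Lemma real_part_sub r (u : 'M_(r, d + (d + m))) :
  u *m imag_part_mx = 0 -> (inF (u *m real_part_mx) <= M)%MS.
Proof.
move=> uK; have := lift_coef_mul u; rewrite uK map_mx0 scaler0 addr0 => <-.
exact: submxMl.
Qed.

Hypothesis M_free : row_free M.

Lemma real_part_inj r (u : 'M_(r, d + (d + m))) :
  u *m imag_part_mx = 0 -> (u *m real_part_mx <= P)%MS -> u = 0.
Proof.
move=> uK /submxP [z uLz].
have : lift_coef u *m M = row_mx 0 (inF z) *m M.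
  by rewrite lift_coef_mul uK uLz map_mx0 scaler0 addr0 mul_row_col mul0mx add0r map_mxM.
move/(row_free_inj M_free)/eq_row_mx => [/alg_w_mx_eq0 [u1_0 u2_0] u3_z].
have [_ u3_0] : - z = 0 /\ rsubmx (rsubmx u) = 0.
  by apply: alg_w_mx_eq0; rewrite u3_z map_mxN addNr.
by rewrite -[u]hsubmxK -[rsubmx u]hsubmxK u1_0 u2_0 u3_0 !row_mx0.
Qed.

Definition real_rows := kermx imag_part_mx *m real_part_mx.

Lemma real_rows_sub : (inF real_rows <= M)%MS.
Proof. by apply: real_part_sub; apply: mulmx_ker. Qed.

Lemma real_rows_inj r (y : 'M_(r, _)) :
  (y *m real_rows <= P)%MS -> y *m kermx imag_part_mx = 0.
Proof. by rewrite mulmxA; apply: real_part_inj; rewrite -mulmxA mulmx_ker mulmx0. Qed.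

Lemma capmx_real_rows_P : (real_rows :&: P)%MS = 0.
Proof.
have /submxP [y yE] := capmxSl real_rows P.
have y0 : y *m kermx imag_part_mx = 0 by apply: real_rows_inj; rewrite -yE capmxSr.
by rewrite yE /real_rows mulmxA y0 mul0mx.
Qed.

Lemma rank_real_rows : \rank real_rows = \rank (kermx imag_part_mx).
Proof.
rewrite -[RHS](mxrank_mul_ker _ real_part_mx) -/real_rows.
suff -> : (kermx imag_part_mx :&: kermx real_part_mx)%MS = 0 by rewrite mxrank0 addn0.
have /submxP [y yE] := capmxSl (kermx imag_part_mx) (kermx real_part_mx).
suff y0 : y *m kermx imag_part_mx = 0 by rewrite yE y0.
apply: real_rows_inj; rewrite /real_rows mulmxA -yE.
have /sub_kermxP -> := capmxSr (kermx imag_part_mx) (kermx real_part_mx).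
exact: sub0mx.
Qed.

Lemma rank_imag_part_mx : (\rank imag_part_mx <= \rank (col_mx A (col_mx B P)))%N.
Proof.
have sAT : (A <= col_mx A (col_mx B P))%MS by rewrite -addsmxE addsmxSl.
have /andP [sBT sPT] : (B <= col_mx A (col_mx B P))%MS && (P <= col_mx A (col_mx B P))%MS.
  by rewrite -col_mx_sub (submx_trans (addsmxSr A _)) ?addsmxE.
by apply: mxrankS; rewrite !col_mx_sub addmx_sub ?scalemx_sub ?sAT ?sBT ?sPT.
Qed.

Lemma exists_real_rows h : (\rank (col_mx A (col_mx B P)) + h <= m + 2 * d)%N ->
  exists R : 'M[F0]_(h, n), [/\ row_free R, (R :&: P)%MS = 0 & (inF R <= M)%MS].
Proof.
move=> rkABP; have [|R [Rfree sRZ]] := @exists_row_free_submx _ _ _ h real_rows.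
  by rewrite rank_real_rows mxrank_ker; have := rank_imag_part_mx; lia.
exists R; split=> //.
  by apply/eqP; rewrite -submx0 -capmx_real_rows_P capmxS.
by rewrite (submx_trans _ real_rows_sub) ?map_submx.
Qed.

End RealCombinations.

End QuadraticExtension.

Theorem lemma3p4 (F0 : fieldType) (F : fieldExtType F0) (w : F)
  (hdim : \dim {:F} = 2%N) (hgen : <<1%VS; w>>%VS = fullv)
  (h d m n : nat) (hhd : (h <= d)%N) (hdn : (d <= n)%N)
  (A B : 'M[F0]_(d, n)) (P : 'M[F0]_(m, n))
  (hrk1 : \rank (col_mx (map_mx (in_alg F) A + w *: map_mx (in_alg F) B)
                        (map_mx (in_alg F) P)) = (m + d)%N)
  (hrkP : \rank P = m)
  (hrk2 : (\rank (col_mx A (col_mx B P)) <= m + 2 * d - h)%N) :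
  exists A' B' : 'M[F0]_(d, n),
    row_equiv (col_mx (map_mx (in_alg F) A + w *: map_mx (in_alg F) B)
                      (map_mx (in_alg F) P))
              (col_mx (map_mx (in_alg F) A' + w *: map_mx (in_alg F) B')
                      (map_mx (in_alg F) P))
    /\ has_zero_rows B' h.
Proof.
have [k dE] : exists k, d = (h + k)%N by exists (d - h)%N; rewrite subnKC.
subst d; set M := col_mx _ _.
have M_free : row_free M by rewrite /row_free hrk1 addnC.
have [|R [R_free RP0 sRM]] := exists_real_rows hdim hgen M_free (h := h).
  by move: hrk2; lia.
have RP_free : row_free (col_mx (map_mx (in_alg F) R) (map_mx (in_alg F) P)).
  rewrite -map_col_mx /row_free mxrank_map -addsmxE.
  by rewrite mxrank_disjoint_sum // (eqP R_free) hrkP.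
have [|X M_RX] := row_equiv_completion M_free RP_free.
  by rewrite col_mx_sub sRM /M -addsmxE addsmxSr.
pose T := col_mx (map_mx (in_alg F) R) X.
exists (map_mx (re w) T), (map_mx (im w) T).
rewrite (re_im_mx hdim hgen) /T map_col_mx (map_im_inF hdim hgen).
by split=> //; apply: has_zero_rows_col0mx.
Qed.
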